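(* The set $\mathcal V=\{\mathbf u(\mathbf B):\mathbf B\in S\}$ is a set of pairwise $M$-distinct vertices of $\mathcal H$, and every vertex of $\mathcal H$ is $M$-equivalent to some member of $\mathcal V$.
   Context: Let $n\ge 1$, $[n]=\{0,\dots,n-1\}$, and real numbers $\gamma_0<\gamma_1<\dots<\gamma_{n-1}$. Consider vectors $\mathbf v=(v_{ydz})_{y\in[n],d,z\in\{0,1\}}\in\mathbb R^{4n}$. Define the linear map $M$ by $(M\mathbf v)_{(i,j,d_0,d_1)}=\sum_{z\in\{0,1\}:d_z=0}v_{i0z}+\sum_{z\in\{0,1\}:d_z=1}v_{j1z}$ for $i,j\in[n]$, $(d_0,d_1)\in\{0,1\}^2$, and $c_{(i,j,d_0,d_1)}=\gamma_j-\gamma_i$. Let $\mathcal H=\{\mathbf v: M\mathbf v\le \mathbf c\}$. Two vectors $\mathbf v_1,\mathbf v_2$ are $M$-equivalent if $M\mathbf v_1=M\mathbf v_2$, and $M$-distinct otherwise. A point $\mathbf v\in\mathcal H$ is a vertex of $\mathcal H$ if whenever $\mathbf v=\lambda\mathbf v_1+(1-\lambda)\mathbf v_2$ with $\lambda\in(0,1)$, $\mathbf v_1,\mathbf v_2\in\mathcal H$, we have $M\mathbf v_1=M\mathbf v_2=M\mathbf v$. Admissible signatures: $S=S_1\cup S_2\cup S_3$, sets of binary arrays $\mathbf B=(B_{ydz})\in\{0,1\}^{n\times2\times2}$: (1) $\mathbf B\in S_1$ iff there is $t\in\{0,\dots,n-2\}$ with $B_{i00}=B_{i01}=1$ for all $i\ge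 t$ and $B_{i00}\ne B_{i01}$ for all $i<t$; $B_{i10}\ne B_{i11}$ for all $i\in[n]$; and there exist $i,j$ with $B_{i10}=B_{j11}=1$. (2) $\mathbf B\in S_2$ iff $B_{(n-1)00}=B_{(n-1)01}=B_{010}=B_{011}=1$; $B_{i00}\ne B_{i01}$ for all $0\le i<n-1$; $B_{j10}\ne B_{j11}$ for all $0<j\le n-1$. (3) $\mathbf B\in S_3$ iff there is $t\in\{1,\dots,n-1\}$ with $B_{i10}=B_{i11}=1$ for all $i\le t$ and $B_{i10}\ne B_{i11}$ for all $i>t$; $B_{i00}\ne B_{i01}$ for all $i\in[n]$; and there exist $i,j$ with $B_{i00}=B_{j01}=1$. Vertex map: for $\mathbf B\in S$, set $\alpha=-\gamma_0-\gamma_t$ if $\mathbf B\in S_1$, $\alpha=-\gamma_0-\gamma_{n-1}$ if $\mathbf B\in S_2$, $\alpha=-\gamma_t-\gamma_{n-1}$ if $\mathbf B\in S_3$ ($t$ as in the respective definition), and define $\mathbf u(\mathbf B)$ by: $u_{i00}=-\gamma_i-\alpha$ if $B_{i00}=1$, else $\gamma_0$; $u_{i10}=\gamma_i$ if $B_{i10}=1$, else $-\gamma_{n-1}-\alpha$; $u_{i01}=-\gamma_i$ if $B_{i01}=1$, else $\gamma_0+\alpha$; $u_{i11}=\gamma_i+\alpha$ if $B_{i11}=1$, else $-\gamma_{n-1}$. *)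

From mathcomp Require Import all_boot all_order all_algebra.
Set Implicit Arguments. Unset Strict Implicit. Unset Printing Implicit Defensive.
Import Order.TTheory GRing.Theory Num.Theory.
Local Open Scope ring_scope.

(* Vectors v = (v_{ydz}) in R^{4n}: y : 'I_n, d z : bool (false = 0, true = 1). *)
Definition vec (T : Type) (n : nat) := 'I_n -> bool -> bool -> T.

Definition Mop (R : realFieldType) (n : nat) (v : vec R n)
    (i j : 'I_n) (d0 d1 : bool) : R :=
  let d := fun z : bool => if z then d1 else d0 in
  \sum_(z : bool | ~~ d z) v i false z + \sum_(z : bool | d z) v j true z.

(* c_{(i,j,d0,d1)} = gamma_j - gamma_i ; gamma indexed by nat, only 0..n-1 used *)
Definition cvec (R : realFieldType) (n : nat) (gamma : nat -> R)
    (i j : 'I_n) (d0 d1 : bool) : R := gamma j - gamma i.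

Definition inH (R : realFieldType) (n : nat) (gamma : nat -> R) (v : vec R n) : Prop :=
  forall (i j : 'I_n) (d0 d1 : bool), Mop v i j d0 d1 <= cvec gamma i j d0 d1.

Definition Mequiv (R : realFieldType) (n : nat) (v1 v2 : vec R n) : Prop :=
  forall (i j : 'I_n) (d0 d1 : bool), Mop v1 i j d0 d1 = Mop v2 i j d0 d1.

Definition is_vertex (R : realFieldType) (n : nat) (gamma : nat -> R) (v : vec R n) : Prop :=
  inH gamma v /\
  forall (lam : R) (v1 v2 : vec R n),
    0 < lam < 1 -> inH gamma v1 -> inH gamma v2 ->
    (forall y d z, v y d z = lam * v1 y d z + (1 - lam) * v2 y d z) ->
    Mequiv v1 v /\ Mequiv v2 v.

Definition inS1 (n : nat) (B : vec bool n) (t : nat) : Prop :=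
  (t.+2 <= n)%N /\
  (forall i : 'I_n, (t <= i)%N -> B i false false /\ B i false true) /\
  (forall i : 'I_n, (i < t)%N -> B i false false != B i false true) /\
  (forall i : 'I_n, B i true false != B i true true) /\
  (exists i j : 'I_n, B i true false /\ B j true true).

Definition inS2 (n : nat) (B : vec bool n) : Prop :=
  (forall i : 'I_n, nat_of_ord i = n.-1 -> B i false false /\ B i false true) /\
  (forall i : 'I_n, nat_of_ord i = 0%N -> B i true false /\ B i true true) /\
  (forall i : 'I_n, (i < n.-1)%N -> B i false false != B i false true) /\
  (forall j : 'I_n, (0 < j)%N -> B j true false != B j true true).

Definition inS3 (n : nat) (B : vec bool n) (t : nat) : Prop :=
  (1 <= t)%N /\ (t <= n.-1)%N /\
  (forall i : 'I_n, (i <= t)%N -> B i true false /\ B i true true) /\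
  (forall i : 'I_n, (t < i)%N -> B i true false != B i true true) /\
  (forall i : 'I_n, B i false false != B i false true) /\
  (exists i j : 'I_n, B i false false /\ B j false true).

Definition inS (n : nat) (B : vec bool n) : Prop :=
  (exists t, inS1 B t) \/ inS2 B \/ (exists t, inS3 B t).

Definition uvec (R : realFieldType) (n : nat) (gamma : nat -> R) (alpha : R)
    (B : vec bool n) : vec R n :=
  fun y d z =>
    match d, z with
    | false, false => if B y false false then - gamma y - alpha else gamma 0%N
    | true, false  => if B y true false then gamma y else - gamma n.-1 - alpha
    | false, true  => if B y false true then - gamma y else gamma 0%N + alpha
    | true, true   => if B y true true then gamma y + alpha else - gamma n.-1
    end.

(* The set V = { u(B) : B in S }, with alpha chosen according to the part of S
   containing B (S1, S2, S3 are pairwise disjoint and t is determined by B). *)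
Definition inV (R : realFieldType) (n : nat) (gamma : nat -> R) (v : vec R n) : Prop :=
  exists B : vec bool n,
    (exists t, inS1 B t /\ v = uvec gamma (- gamma 0%N - gamma t) B) \/
    (inS2 B /\ v = uvec gamma (- gamma 0%N - gamma n.-1) B) \/
    (exists t, inS3 B t /\ v = uvec gamma (- gamma t - gamma n.-1) B).

(* [M] vanishes exactly on the shifts [v_{yd0} += s, v_{yd1} -= s].  Read each
   tight constraint of a point [v] of [H] as an edge joining the two coordinates
   it sums: [v] is a vertex iff this graph connects all [4n] coordinates, since
   then the tight equations fix [v] up to a shift, while a union of components
   can be moved by [+e] on its [z = 0] and [-e] on its [z = 1] coordinates
   without leaving [H].  For [B] in [S], [u(B)] lies in [H] and has a connected
   tight graph, and the normalisation of [u_{i01}] rules out a shift between two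
   of them.  Conversely, for a vertex [v] put [p = max_i (v_{i00} + gamma_i)] and
   [q = max_i (v_{i01} + gamma_i)], so that [-p] and [-q] are the maxima of
   [v_{j11} - gamma_j] and [v_{j10} - gamma_j]; recording where these four maxima
   are attained gives a signature [B] in [S] with [v] M-equivalent to [u(B)] for
   [alpha = -(p + q)]. *)

From mathcomp Require Import all_boot all_order all_algebra.
From mathcomp Require Import lra zify.
From Stdlib Require Import Classical FunctionalExtensionality.
Set Implicit Arguments. Unset Strict Implicit. Unset Printing Implicit Defensive.
Import Order.TTheory GRing.Theory Num.Theory.
Local Open Scope ring_scope.

Definition summand0 (T : Type) n (v : vec T n) (i j : 'I_n) (d0 : bool) : T :=
  if d0 then v j true false else v i false false.
Definition summand1 (T : Type) n (v : vec T n) (i j : 'I_n) (d1 : bool) : T :=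
  if d1 then v j true true else v i false true.

Lemma vec_ext (T : Type) n (v w : vec T n) : (forall y d z, v y d z = w y d z) -> v = w.
Proof.
move=> E; apply: functional_extensionality => y; apply: functional_extensionality => d.
exact: functional_extensionality.
Qed.

Lemma MopE (R : realFieldType) n (v : vec R n) i j d0 d1 :
  Mop v i j d0 d1 = summand0 v i j d0 + summand1 v i j d1.
Proof.
rewrite /Mop big_mkcond [X in _ + X]big_mkcond /= !big_bool /=.
by case: d0; case: d1 => /=; lra.
Qed.

Lemma convex_le_eq (R : realDomainType) (lam x1 x2 c : R) : 0 < lam < 1 ->
  lam * x1 + (1 - lam) * x2 = c -> x1 <= c -> x2 <= c -> x1 = c /\ x2 = c.
Proof. by move=> /andP[l0 l1] E h1 h2; split; nra. Qed.

Section TightGraph.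
Variables (R : realFieldType) (m : nat) (gamma : nat -> R).
Local Notation n := m.+1.

Definition shift (s : R) (v : vec R n) : vec R n :=
  fun y d z => v y d z + (if z then - s else s).

Definition perturb (K : vec bool n) (s : R) (v : vec R n) : vec R n :=
  fun y d z => if K y d z then shift s v y d z else v y d z.

Lemma Mop_shift s v i j d0 d1 : Mop (shift s v) i j d0 d1 = Mop v i j d0 d1.
Proof. by rewrite !MopE /summand0 /summand1 /shift; case: d0; case: d1 => /=; lra. Qed.

Lemma shift0 (v : vec R n) : shift 0 v = v.
Proof. by apply: vec_ext => y d [] /=; rewrite /shift ?oppr0 addr0. Qed.

Lemma Mop_perturb K s v i j d0 d1 :
  Mop (perturb K s v) i j d0 d1 =
  Mop v i j d0 d1 + ((summand0 K i j d0)%:R - (summand1 K i j d1)%:R) * s.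
Proof.
rewrite !MopE /summand0 /summand1 /perturb /shift.
by case: d0; case: d1 => /=; case: (K _ _ _); case: (K _ _ _) => /=; lra.
Qed.

Lemma MequivP (w v : vec R n) : Mequiv w v <-> exists s, w = shift s v.
Proof.
split=> [E | [s ->] i j d0 d1]; last exact: Mop_shift.
pose s := w ord0 false false - v ord0 false false.
have w11 j : w j true true = v j true true - s.
  by have := E ord0 j false true; rewrite !MopE /= /s; lra.
have w00 i : w i false false = v i false false + s.
  by have := E i ord0 false true; rewrite !MopE /= w11; lra.
have w01 i : w i false true = v i false true - s.
  by have := E i ord0 false false; rewrite !MopE /= w00; lra.
have w10 j : w j true false = v j true false + s.
  by have := E ord0 j true false; rewrite !MopE /= w01; lra.
by exists s; apply: vec_ext => y [] [].
Qed.

Definition tight (v : vec R n) i j d0 d1 := Mop v i j d0 d1 = cvec gamma i j d0 d1.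

(* Each tight constraint is an edge between the two coordinates it sums; a
   [tight_closed] predicate is a union of connected components of this graph. *)
Definition tight_closed (v : vec R n) (K : vec bool n) :=
  forall i j d0 d1, tight v i j d0 d1 -> summand0 K i j d0 = summand1 K i j d1.

Definition tight_connected (v : vec R n) :=
  forall K, tight_closed v K -> forall y d z y' d' z', K y d z -> K y' d' z'.

Lemma tight_connected_shift (v w : vec R n) : tight_connected v ->
  (forall i j d0 d1, tight v i j d0 d1 -> tight w i j d0 d1) ->
  exists s, w = shift s v.
Proof.
move=> Hc Hvw; pose s := w ord0 false false - v ord0 false false.
pose K : vec bool n := fun y d z => w y d z == shift s v y d z.
have HK : tight_closed v K.
  move=> i j d0 d1 T; have := Hvw _ _ _ _ T; move: T; rewrite /tight !MopE /K /shift.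
  by case: d0; case: d1 => /= T1 T2; apply/idP/idP => /eqP h; apply/eqP; lra.
have K0 : K ord0 false false by rewrite /K /shift /s; apply/eqP; lra.
by exists s; apply: vec_ext => y d z; apply/eqP/(Hc K HK _ _ _ y d z K0).
Qed.

Lemma tight_connected_vertex v : inH gamma v -> tight_connected v -> is_vertex gamma v.
Proof.
move=> Hv Hc; split=> // lam v1 v2 Hl H1 H2 Hcomb.
have tight12 i j d0 d1 : tight v i j d0 d1 -> tight v1 i j d0 d1 /\ tight v2 i j d0 d1.
  move=> T; apply: convex_le_eq Hl _ (H1 i j d0 d1) (H2 i j d0 d1).
  by rewrite -T !MopE /summand0 /summand1; case: {T} d0; case: d1; rewrite !Hcomb; lra.
by split; apply/MequivP; apply: tight_connected_shift => // i j d0 d1 /tight12[].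
Qed.

Lemma inH_perturb v K : inH gamma v -> tight_closed v K ->
  exists2 e : R, 0 < e & forall s, `|s| <= e -> inH gamma (perturb K s v).
Proof.
move=> Hv HK.
pose slack (r : 'I_n * 'I_n * bool * bool) :=
  cvec gamma r.1.1.1 r.1.1.2 r.1.2 r.2 - Mop v r.1.1.1 r.1.1.2 r.1.2 r.2.
exists (\big[Num.min/1]_(r | 0 < slack r) slack r).
  by apply: (big_ind (fun x => 0 < x)) => // a b a0 b0; rewrite lt_min a0 b0.
move=> s se i j d0 d1; rewrite Mop_perturb.
have [sl0|slpos] := eqVneq (slack (i, j, d0, d1)) 0.
  have -> : summand0 K i j d0 = summand1 K i j d1.
    by apply: HK; move: sl0; rewrite /tight /slack /=; lra.
  by rewrite subrr mul0r addr0.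
have {}slpos : 0 < slack (i, j, d0, d1) by rewrite lt_def slpos subr_ge0 Hv.
have : \big[Num.min/1]_(r | 0 < slack r) slack r <= slack (i, j, d0, d1).
  by rewrite (bigD1 (i, j, d0, d1)) //= ge_min lexx.
rewrite /slack /=; have := ler_norm s; have := ler_norm (- s); rewrite normrN.
by case: (summand0 K _ _ _); case: (summand1 K _ _ _) => /=; lra.
Qed.

Lemma vertex_tight_connected v : is_vertex gamma v -> tight_connected v.
Proof.
move=> [Hv Hvert] K HK y d z y' d' z' Ky; apply/negPn/negP => nKy'.
have [e e0 He] := inH_perturb Hv HK.
have mid : 0 < (1 / 2 : R) < 1 by apply/andP; split; lra.
have e_le : `|e| <= e by rewrite ger0_norm // ltW.
have Ne_le : `|- e| <= e by rewrite normrN.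
have v_mid y0 d0 z0 : v y0 d0 z0 =
    1 / 2 * perturb K e v y0 d0 z0 + (1 - 1 / 2) * perturb K (- e) v y0 d0 z0.
  by rewrite /perturb /shift; case: (K _ _ _); case: z0; lra.
have [E _] := Hvert _ _ _ mid (He _ e_le) (He _ Ne_le) v_mid.
have [s Es] := (MequivP _ _).1 E.
have := congr1 (fun w => w y' d' z') Es; have := congr1 (fun w => w y d z) Es.
by rewrite /perturb Ky (negbTE nKy') /shift; case: {Ky} z; case: {nKy'} z' => /=; lra.
Qed.

Lemma vertexP v : is_vertex gamma v <-> inH gamma v /\ tight_connected v.
Proof.
split=> [Hv | [Hv Hc]]; last exact: tight_connected_vertex.
by split; [exact: Hv.1 | exact: vertex_tight_connected].
Qed.

End TightGraph.

Section VertexOfSignature.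
Variables (R : realFieldType) (m : nat) (gamma : nat -> R).
Local Notation n := m.+1.
Hypothesis gamma_incr : forall i j : nat, (i < j < n)%N -> gamma i < gamma j.

Lemma gamma_lt (i j : nat) : (i < j)%N -> (j < n)%N -> gamma i < gamma j.
Proof. by move=> ij jn; apply: gamma_incr; rewrite ij jn. Qed.

Lemma gamma_le (i j : nat) : (i <= j)%N -> (j < n)%N -> gamma i <= gamma j.
Proof.
by rewrite leq_eqVlt => /predU1P[-> // | ij] jn; apply/ltW/gamma_lt.
Qed.

Lemma gamma0_le (j : 'I_n) : gamma 0%N <= gamma j.
Proof. exact: gamma_le. Qed.

Lemma gamma_le_last (j : 'I_n) : gamma j <= gamma m.
Proof. by apply: gamma_le; rewrite // -ltnS. Qed.

(* Sufficient conditions for [uvec gamma alpha B] to be a vertex: the first two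
   make it feasible, the remaining ones make its tight graph connected. *)
Definition vertex_signature (alpha : R) (B : vec bool n) :=
  [/\ forall i : 'I_n, if B i false false && B i false true
        then - alpha <= gamma 0%N + gamma i else gamma 0%N + gamma i <= - alpha,
      forall j : 'I_n, if B j true false && B j true true
        then alpha <= - gamma j - gamma m else - gamma j - gamma m <= alpha,
      forall i : 'I_n, B i false false || B i false true,
      forall j : 'I_n, B j true false || B j true true &
      [/\ exists i, B i false false, exists i, B i false true,
          exists j, B j true false, exists j, B j true true &
          (exists i : 'I_n,
             [/\ B i false false, B i false true & alpha = - gamma 0%N - gamma i]) \/
          (exists j : 'I_n,
             [/\ B j true false, B j true true & alpha = - gamma j - gamma m])]].

Lemma inH_uvec alpha B : vertex_signature alpha B -> inH gamma (uvec gamma alpha B).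
Proof.
case=> Hi Hj _ _ _ i j d0 d1; rewrite MopE /cvec.
move: (Hi i) (Hj j) (gamma0_le i) (gamma0_le j) (gamma_le_last i) (gamma_le_last j).
rewrite /uvec /summand0 /summand1.
by case: d0; case: d1; case: (B i false false); case: (B i false true);
  case: (B j true false); case: (B j true true) => /=; lra.
Qed.

Lemma uvec_tight01 (alpha : R) (B : vec bool n) (i j : 'I_n) :
  B i false false -> B j true true ->
  tight gamma (uvec gamma alpha B) i j false true.
Proof. by move=> hi hj; rewrite /tight MopE /cvec /uvec /= hi hj; lra. Qed.

Lemma uvec_tight10 (alpha : R) (B : vec bool n) (i j : 'I_n) :
  B i false true -> B j true false ->
  tight gamma (uvec gamma alpha B) i j true false.
Proof. by move=> hi hj; rewrite /tight MopE /cvec /uvec /= hi hj; lra. Qed.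

Lemma uvec_tight00 (alpha : R) (B : vec bool n) (i : 'I_n) :
  B i false false != B i false true ->
  tight gamma (uvec gamma alpha B) i ord0 false false.
Proof.
rewrite /tight MopE /cvec /uvec /=.
by case: (B i false false); case: (B i false true) => //= _; lra.
Qed.

Lemma uvec_tight11 (alpha : R) (B : vec bool n) (j : 'I_n) :
  B j true false != B j true true ->
  tight gamma (uvec gamma alpha B) ord_max j true true.
Proof.
rewrite /tight MopE /cvec /uvec /=.
by case: (B j true false); case: (B j true true) => //= _; lra.
Qed.

Lemma uvec_tight_connected alpha B :
  vertex_signature alpha B -> tight_connected gamma (uvec gamma alpha B).
Proof.
case=> _ _ cov0 cov1 [[i0 B00] [i1 B01] [j1 B10] [j0 B11] hub] K HK.
have K0011 i j : B i false false -> B j true true -> K i false false = K j true true.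
  by move=> hi hj; apply: (HK _ _ _ _ (uvec_tight01 alpha hi hj)).
have K1001 i j : B i false true -> B j true false -> K j true false = K i false true.
  by move=> hi hj; apply: (HK _ _ _ _ (uvec_tight10 alpha hi hj)).
have KA i : B i false false -> K i false false = K i0 false false.
  by move=> h; rewrite (K0011 i j0) // (K0011 i0 j0).
have KE j : B j true true -> K j true true = K i0 false false.
  by move=> h; rewrite (K0011 i0 j).
have KB i : B i false true -> K i false true = K i1 false true.
  by move=> h; rewrite -(K1001 i j1) // (K1001 i1 j1).
have KC j : B j true false -> K j true false = K i1 false true.
  by move=> h; rewrite (K1001 i1 j).
have KAB : K i1 false true = K i0 false false.
  case: hub => [[i [h1 h2 ha]] | [j [h1 h2 ha]]].
  - rewrite -(KA i h1) -(KB i h2); apply/esym/(HK i ord0 false false).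
    by rewrite /tight MopE /cvec /uvec /= h1 h2 ha; lra.
  - rewrite -(KE j h2) -(KC j h1); apply: (HK ord_max j true true).
    by rewrite /tight MopE /cvec /uvec /= h1 h2 ha; lra.
rewrite KAB in KB KC.
have K0 i : B i false false != B i false true -> K i false false = K i false true.
  by move/(uvec_tight00 alpha)/HK.
have K1 j : B j true false != B j true true -> K j true false = K j true true.
  by move/(uvec_tight11 alpha)/HK.
have Kconst y d z : K y d z = K i0 false false.
  case: d; case: z.
  - case: (boolP (B y true true)) => h; first exact: KE.
    have h' : B y true false by move: (cov1 y); rewrite (negbTE h) orbF.
    by rewrite -K1 ?KC ?h' ?(negbTE h).
  - case: (boolP (B y true false)) => h; first exact: KC.
    have h' : B y true true by move: (cov1 y); rewrite (negbTE h).
    by rewrite K1 ?KE ?h' ?(negbTE h).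
  - case: (boolP (B y false true)) => h; first exact: KB.
    have h' : B y false false by move: (cov0 y); rewrite (negbTE h) orbF.
    by rewrite -K0 ?KA ?h' ?(negbTE h).
  - case: (boolP (B y false false)) => h; first exact: KA.
    have h' : B y false true by move: (cov0 y); rewrite (negbTE h).
    by rewrite K0 ?KB ?h' ?(negbTE h).
by move=> y d z y' d' z'; rewrite !Kconst.
Qed.

Lemma uvec_vertex alpha B :
  vertex_signature alpha B -> is_vertex gamma (uvec gamma alpha B).
Proof.
by move=> sB; apply/vertexP; split; [apply: inH_uvec | apply: uvec_tight_connected].
Qed.

Lemma uvec01_le alpha B (i : 'I_n) :
  vertex_signature alpha B -> uvec gamma alpha B i false true <= - gamma i.
Proof.
case=> /(_ i) + _ _ _ _; rewrite /uvec.
by case: (B i false false); case: (B i false true) => /=; lra.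
Qed.

(* The normalisation [max_i (u_{i01} + gamma_i) = 0] leaves no room for a shift. *)
Lemma uvec_Mequiv_eq a1 B1 a2 B2 :
  vertex_signature a1 B1 -> vertex_signature a2 B2 ->
  Mequiv (uvec gamma a1 B1) (uvec gamma a2 B2) -> uvec gamma a1 B1 = uvec gamma a2 B2.
Proof.
move=> s1 s2 /MequivP[s E].
have [_ _ _ _ [_ [i1 B1i1] _ _ _]] := s1; have [_ _ _ _ [_ [i2 B2i2] _ _ _]] := s2.
have u1 : uvec gamma a1 B1 i1 false true = - gamma i1 by rewrite /uvec B1i1.
have u2 : uvec gamma a2 B2 i2 false true = - gamma i2 by rewrite /uvec B2i2.
have e1 : uvec gamma a1 B1 i1 false true = uvec gamma a2 B2 i1 false true - s.
  by rewrite E.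
have e2 : uvec gamma a1 B1 i2 false true = uvec gamma a2 B2 i2 false true - s.
  by rewrite E.
have le1 := uvec01_le i2 s1; have le2 := uvec01_le i1 s2.
have s0 : s = 0 by lra.
by rewrite E s0 shift0.
Qed.

Lemma inS1_signature B t : inS1 B t -> vertex_signature (- gamma 0%N - gamma t) B.
Proof.
case=> tm [Hge [Hlt [Hd [i [j [hi hj]]]]]].
have tn : (t < n)%N by lia.
have gtm : gamma t <= gamma m by apply: gamma_le; lia.
split.
- move=> i'; case: (leqP t i') => h.
    have [-> ->] := Hge i' h; have := gamma_le h (ltn_ord i'); rewrite /=; lra.
  have := gamma0_le i'; have := gamma_le (ltnW h) tn; have := Hlt i' h.
  by case: (B i' false false); case: (B i' false true) => //= _; lra.
- move=> j'; have := gamma0_le j'; have := Hd j'.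
  by case: (B j' true false); case: (B j' true true) => //= _; lra.
- move=> i'; case: (leqP t i') => h; first by have [-> ->] := Hge i' h.
  by move: (Hlt i' h); case: (B i' false false); case: (B i' false true).
- by move=> j'; move: (Hd j'); case: (B j' true false); case: (B j' true true).
- have [Bm0 Bm1] : B ord_max false false /\ B ord_max false true by apply: Hge => /=; lia.
  split; [by exists ord_max | by exists ord_max | by exists i | by exists j |].
  by left; exists (Ordinal tn); have [? ?] := Hge (Ordinal tn) (leqnn t).
Qed.

Lemma inS2_signature B : inS2 B -> vertex_signature (- gamma 0%N - gamma m) B.
Proof.
case=> Hm [H0 [Hlt Hgt]].
have g0m : gamma 0%N <= gamma m by apply: gamma_le.
split.
- move=> i'; case: (ltnP i' m) => h.
    have := gamma_le_last i'; have := Hlt i' h.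
    by case: (B i' false false); case: (B i' false true) => //= _; lra.
  have e : nat_of_ord i' = m by have := ltn_ord i'; lia.
  by have [-> ->] := Hm i' e; rewrite /= e; lra.
- move=> j'; case: (posnP j') => h.
    by have [-> ->] := H0 j' h; rewrite /= h; lra.
  have := gamma0_le j'; have := Hgt j' h.
  by case: (B j' true false); case: (B j' true true) => //= _; lra.
- move=> i'; case: (ltnP i' m) => h.
    by move: (Hlt i' h); case: (B i' false false); case: (B i' false true).
  have e : nat_of_ord i' = m by have := ltn_ord i'; lia.
  by have [-> ->] := Hm i' e.
- move=> j'; case: (posnP j') => h; first by have [-> ->] := H0 j' h.
  by move: (Hgt j' h); case: (B j' true false); case: (B j' true true).
- have [Bm0 Bm1] := Hm ord_max erefl; have [B00 B01] := H0 ord0 erefl.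
  split; [by exists ord_max | by exists ord_max | by exists ord0 | by exists ord0 |].
  by left; exists ord_max.
Qed.

Lemma inS3_signature B t : inS3 B t -> vertex_signature (- gamma t - gamma m) B.
Proof.
case=> t1 [tm [Hle [Hgt [Hd [i [j [hi hj]]]]]]].
have tn : (t < n)%N by lia.
have g0t : gamma 0%N <= gamma t by apply: gamma_le.
split.
- move=> i'; have := gamma_le_last i'; have := Hd i'.
  by case: (B i' false false); case: (B i' false true) => //= _; lra.
- move=> j'; case: (leqP j' t) => h.
    have [-> ->] := Hle j' h; have := gamma_le h tn; rewrite /=; lra.
  have := gamma_le (ltnW h) (ltn_ord j'); have := Hgt j' h.
  by case: (B j' true false); case: (B j' true true) => //= _; lra.
- by move=> i'; move: (Hd i'); case: (B i' false false); case: (B i' false true).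
- move=> j'; case: (leqP j' t) => h; first by have [-> ->] := Hle j' h.
  by move: (Hgt j' h); case: (B j' true false); case: (B j' true true).
- have [B00 B01] := Hle ord0 (leq0n t).
  split; [by exists i | by exists j | by exists ord0 | by exists ord0 |].
  by right; exists (Ordinal tn); have [? ?] := Hle (Ordinal tn) (leqnn t).
Qed.

Lemma inV_signature v :
  inV gamma v -> exists alpha B, v = uvec gamma alpha B /\ vertex_signature alpha B.
Proof.
case=> B [[t [/inS1_signature sB ->]] | [[/inS2_signature sB ->] |
                                          [t [/inS3_signature sB ->]]]];
  by do 2 eexists; split; last exact: sB.
Qed.

End VertexOfSignature.

Section SignatureOfVertex.
Variables (R : realFieldType) (m : nat) (gamma : nat -> R).
Local Notation n := m.+1.
Hypothesis gamma_incr : forall i j : nat, (i < j < n)%N -> gamma i < gamma j.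
Variable v : vec R n.
Hypotheses (Hv : inH gamma v) (Hc : tight_connected gamma v).

Definition coord (y : 'I_n) (d z : bool) := (y, d, z).

Lemma tight_cover y d z : exists i j d0 d1, tight gamma v i j d0 d1 /\
  (summand0 coord i j d0 = (y, d, z) \/ summand1 coord i j d1 = (y, d, z)).
Proof.
apply: NNPP => uncovered.
pose K : vec bool n := fun y' d' z' => coord y' d' z' == (y, d, z).
have HK : tight_closed gamma v K.
  move=> i j d0 d1 T.
  have [e0 | n0] := eqVneq (summand0 coord i j d0) (y, d, z).
    by case: uncovered; exists i, j, d0, d1; split => //; left.
  have [e1 | n1] := eqVneq (summand1 coord i j d1) (y, d, z).
    by case: uncovered; exists i, j, d0, d1; split => //; right.
  by rewrite /K; case: {T} d0 n0; case: d1 n1 => /= /negbTE-> /negbTE->.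
have Ky : K y d z by rewrite /K eqxx.
have := @Hc K HK y d z y d (~~ z) Ky; rewrite /K /coord => /eqP.
by case: z {uncovered Ky HK K}.
Qed.

Lemma sum00_le (i j : 'I_n) : v i false false + v i false true <= gamma j - gamma i.
Proof. by have := Hv i j false false; rewrite MopE. Qed.
Lemma sum11_le (i j : 'I_n) : v j true false + v j true true <= gamma j - gamma i.
Proof. by have := Hv i j true true; rewrite MopE. Qed.
Lemma sum01_le (i j : 'I_n) : v i false false + v j true true <= gamma j - gamma i.
Proof. by have := Hv i j false true; rewrite MopE. Qed.
Lemma sum10_le (i j : 'I_n) : v j true false + v i false true <= gamma j - gamma i.
Proof. by have := Hv i j true false; rewrite MopE. Qed.

(* By monotonicity of [gamma], a tight constraint of type [00] (resp. [11]) is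
   the one with [j = 0] (resp. [i = n - 1]). *)
Definition tight00 (i : 'I_n) := v i false false + v i false true = gamma 0%N - gamma i.
Definition tight11 (j : 'I_n) := v j true false + v j true true = gamma j - gamma m.
Definition tight01 (i j : 'I_n) := v i false false + v j true true = gamma j - gamma i.
Definition tight10 (i j : 'I_n) := v j true false + v i false true = gamma j - gamma i.

Lemma tight00_of (i j : 'I_n) : tight gamma v i j false false -> tight00 i.
Proof.
rewrite /tight MopE /cvec /tight00 /= => h.
by have := sum00_le i ord0; have := gamma0_le gamma_incr j; rewrite /=; lra.
Qed.
Lemma tight11_of (i j : 'I_n) : tight gamma v i j true true -> tight11 j.
Proof.
rewrite /tight MopE /cvec /tight11 /= => h.
by have := sum11_le ord_max j; have := gamma_le_last gamma_incr i; rewrite /=; lra.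
Qed.

Lemma tight01_of (i j : 'I_n) : tight gamma v i j false true -> tight01 i j.
Proof. by rewrite /tight MopE. Qed.
Lemma tight10_of (i j : 'I_n) : tight gamma v i j true false -> tight10 i j.
Proof. by rewrite /tight MopE. Qed.

Lemma cover00 (i : 'I_n) : tight00 i \/ exists j, tight01 i j.
Proof.
have [i' [j [d0 [d1 [T [E | E]]]]]] := tight_cover i false false; last by case: d1 {T} E.
case: d0 T E => //= T [ei]; subst; case: d1 T => T.
- by right; exists j; apply: tight01_of.
- by left; apply: tight00_of T.
Qed.
Lemma cover01 (i : 'I_n) : tight00 i \/ exists j, tight10 i j.
Proof.
have [i' [j [d0 [d1 [T [E | E]]]]]] := tight_cover i false true; first by case: d0 {T} E.
case: d1 T E => //= T [ei]; subst; case: d0 T => T.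
- by right; exists j; apply: tight10_of.
- by left; apply: tight00_of T.
Qed.
Lemma cover10 (j : 'I_n) : tight11 j \/ exists i, tight10 i j.
Proof.
have [i [j' [d0 [d1 [T [E | E]]]]]] := tight_cover j true false; last by case: d1 {T} E.
case: d0 T E => //= T [ei]; subst; case: d1 T => T.
- by left; apply: tight11_of T.
- by right; exists i; apply: tight10_of.
Qed.
Lemma cover11 (j : 'I_n) : tight11 j \/ exists i, tight01 i j.
Proof.
have [i [j' [d0 [d1 [T [E | E]]]]]] := tight_cover j true true; first by case: d0 {T} E.
case: d1 T E => //= T [ei]; subst; case: d0 T => T.
- by left; apply: tight11_of T.
- by right; exists i; apply: tight01_of.
Qed.

(* The constraints [(n-1, 0, 0, 1)] and [(n-1, 0, 1, 0)] have the same total as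
   [(n-1, 0, 0, 0)] and [(n-1, 0, 1, 1)], so they are tight when those are. *)
Lemma exists_tight01 : exists i j, tight01 i j.
Proof.
apply: NNPP => none; have nX i j : ~ tight01 i j by move=> h; apply: none; exists i, j.
have hP : tight00 ord_max by case: (cover00 ord_max) => // -[j /nX].
have hQ : tight11 ord0 by case: (cover11 ord0) => // -[i /nX].
apply: (nX ord_max ord0); move: hP hQ; rewrite /tight00 /tight11 /tight01 /=.
by have := sum10_le ord_max ord0; have := sum01_le ord_max ord0; rewrite /=; lra.
Qed.

Lemma exists_tight10 : exists i j, tight10 i j.
Proof.
apply: NNPP => none; have nY i j : ~ tight10 i j by move=> h; apply: none; exists i, j.
have hP : tight00 ord_max by case: (cover01 ord_max) => // -[j /nY].
have hQ : tight11 ord0 by case: (cover10 ord0) => // -[i /nY].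
apply: (nY ord_max ord0); move: hP hQ; rewrite /tight00 /tight11 /tight10 /=.
by have := sum10_le ord_max ord0; have := sum01_le ord_max ord0; rewrite /=; lra.
Qed.

Section Signature.
Variables i0 j0 i1 j1 : 'I_n.
Hypotheses (hX : tight01 i0 j0) (hY : tight10 i1 j1).

Let p := v i0 false false + gamma i0.
Let q := v i1 false true + gamma i1.

Definition vsig : vec bool n := fun y d z =>
  match d, z with
  | false, false => v y false false + gamma y == p
  | false, true => v y false true + gamma y == q
  | true, false => v y true false - gamma y == - q
  | true, true => v y true true - gamma y == - p
  end.
Arguments vsig : simpl never.

Lemma v00_le (i : 'I_n) : v i false false + gamma i <= p.
Proof. by have := sum01_le i j0; move: hX; rewrite /tight01 /p; lra. Qed.
Lemma v11_le (j : 'I_n) : v j true true - gamma j <= - p.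
Proof. by have := sum01_le i0 j; move: hX; rewrite /tight01 /p; lra. Qed.
Lemma v01_le (i : 'I_n) : v i false true + gamma i <= q.
Proof. by have := sum10_le i j1; move: hY; rewrite /tight10 /q; lra. Qed.
Lemma v10_le (j : 'I_n) : v j true false - gamma j <= - q.
Proof. by have := sum10_le i1 j; move: hY; rewrite /tight10 /q; lra. Qed.

Lemma tight01_max (i j : 'I_n) : tight01 i j ->
  v i false false + gamma i = p /\ v j true true - gamma j = - p.
Proof. by rewrite /tight01 => h; have := v00_le i; have := v11_le j; split; lra. Qed.
Lemma tight10_max (i j : 'I_n) : tight10 i j ->
  v i false true + gamma i = q /\ v j true false - gamma j = - q.
Proof. by rewrite /tight10 => h; have := v01_le i; have := v10_le j; split; lra. Qed.

Lemma tight00_of_vsig00 (i : 'I_n) : ~~ vsig i false false -> tight00 i.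
Proof. by move=> /eqP h; case: (cover00 i) => // -[j /tight01_max[]]. Qed.
Lemma tight00_of_vsig01 (i : 'I_n) : ~~ vsig i false true -> tight00 i.
Proof. by move=> /eqP h; case: (cover01 i) => // -[j /tight10_max[]]. Qed.
Lemma tight11_of_vsig10 (j : 'I_n) : ~~ vsig j true false -> tight11 j.
Proof. by move=> /eqP h; case: (cover10 j) => // -[i /tight10_max[]]. Qed.
Lemma tight11_of_vsig11 (j : 'I_n) : ~~ vsig j true true -> tight11 j.
Proof. by move=> /eqP h; case: (cover11 j) => // -[i /tight01_max[]]. Qed.

Lemma vsig_cover0 (i : 'I_n) : vsig i false false || vsig i false true.
Proof.
apply/negPn/negP => /norP[h00 h01].
pose K : vec bool n := fun y d _ => (y == i) && ~~ d.
have HK : tight_closed gamma v K.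
  move=> i' j d0 d1 T; rewrite /K; case: d0 T; case: d1 => T /=; rewrite ?andbF ?andbT //.
  - apply/esym/negbTE/negP => /eqP e; subst i'.
    by have [e _] := tight10_max (tight10_of T); rewrite /vsig e eqxx in h01.
  - apply/negbTE/negP => /eqP e; subst i'.
    by have [e _] := tight01_max (tight01_of T); rewrite /vsig e eqxx in h00.
have Ki : K i false false by rewrite /K eqxx.
by have := @Hc K HK i false false i true false Ki; rewrite /K eqxx.
Qed.

Lemma vsig_cover1 (j : 'I_n) : vsig j true false || vsig j true true.
Proof.
apply/negPn/negP => /norP[h10 h11].
pose K : vec bool n := fun y d _ => (y == j) && d.
have HK : tight_closed gamma v K.
  move=> i j' d0 d1 T; rewrite /K; case: d0 T; case: d1 => T /=; rewrite ?andbF ?andbT //.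
  - apply/negbTE/negP => /eqP e; subst j'.
    by have [_ e] := tight10_max (tight10_of T); rewrite /vsig e eqxx in h10.
  - apply/esym/negbTE/negP => /eqP e; subst j'.
    by have [_ e] := tight01_max (tight01_of T); rewrite /vsig e eqxx in h11.
have Kj : K j true false by rewrite /K eqxx.
by have := @Hc K HK j true false j false false Kj; rewrite /K eqxx.
Qed.

(* Otherwise the coordinates in the [p]-classes (00 in [vsig], 11 in [vsig])
   together with those outside the [q]-classes would form a tight-closed set. *)
Lemma vsig_hub :
  (exists i : 'I_n, [/\ vsig i false false, vsig i false true & tight00 i]) \/
  (exists j : 'I_n, [/\ vsig j true false, vsig j true true & tight11 j]).
Proof.
apply: NNPP => no_hub.
pose K : vec bool n := fun y d z =>
  match d, z with
  | false, false => vsig y false false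
  | false, true => ~~ vsig y false true
  | true, false => ~~ vsig y true false
  | true, true => vsig y true true
  end.
have HK : tight_closed gamma v K.
  move=> i j d0 d1 T; rewrite /K; case: d0 T; case: d1 => T /=.
  - have hQ := tight11_of T; move: (vsig_cover1 j).
    case: (boolP (vsig j true false)) => h10; case: (boolP (vsig j true true)) => h11 //= _.
    by case: no_hub; right; exists j.
  - by have [e1 e2] := tight10_max (tight10_of T); rewrite /vsig e1 e2 !eqxx.
  - by have [e1 e2] := tight01_max (tight01_of T); rewrite /vsig e1 e2 !eqxx.
  - have hP := tight00_of T; move: (vsig_cover0 i).
    case: (boolP (vsig i false false)) => h00; case: (boolP (vsig i false true)) => h01 //= _.
    by case: no_hub; left; exists i.
have Ki0 : K i0 false false by rewrite /K /vsig /p eqxx.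
by have := @Hc K HK i0 false false i1 false true Ki0; rewrite /K /vsig /q eqxx.
Qed.

Lemma Mequiv_uvec_vsig : Mequiv v (uvec gamma (- (p + q)) vsig).
Proof.
apply/MequivP; exists (- q); apply: vec_ext => y [] []; rewrite /shift /uvec /=.
- case: (boolP (vsig y true true)) => h; first by move: h => /eqP; lra.
  have := tight11_of_vsig11 h; move: (vsig_cover1 y).
  by rewrite (negbTE h) orbF => /eqP; rewrite /tight11; lra.
- case: (boolP (vsig y true false)) => h; first by move: h => /eqP; lra.
  have := tight11_of_vsig10 h; move: (vsig_cover1 y).
  by rewrite (negbTE h) /= => /eqP; rewrite /tight11; lra.
- case: (boolP (vsig y false true)) => h; first by move: h => /eqP; lra.
  have := tight00_of_vsig01 h; move: (vsig_cover0 y).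
  by rewrite (negbTE h) orbF => /eqP; rewrite /tight00; lra.
- case: (boolP (vsig y false false)) => h; first by move: h => /eqP; lra.
  have := tight00_of_vsig00 h; move: (vsig_cover0 y).
  by rewrite (negbTE h) /= => /eqP; rewrite /tight00; lra.
Qed.

Lemma vsig_both0_le (i : 'I_n) :
  vsig i false false && vsig i false true -> p + q <= gamma 0%N + gamma i.
Proof.
by rewrite /vsig => /andP[/eqP h1 /eqP h2]; have := sum00_le i ord0; rewrite /=; lra.
Qed.

Lemma vsig_both1_le (j : 'I_n) :
  vsig j true false && vsig j true true -> gamma j + gamma m <= p + q.
Proof.
by rewrite /vsig => /andP[/eqP h1 /eqP h2]; have := sum11_le ord_max j; rewrite /=; lra.
Qed.

Lemma vsig_notboth0_lt (i : 'I_n) :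
  ~~ (vsig i false false && vsig i false true) -> gamma 0%N + gamma i < p + q.
Proof.
move=> nb; have cov := vsig_cover0 i.
case: (boolP (vsig i false false)) => h00 in nb cov *.
- have hP := tight00_of_vsig01 nb; move: h00 nb; rewrite /tight00 /vsig in hP * => /eqP e.
  by have := v01_le i; rewrite le_eqVlt => /predU1P[-> | lt]; rewrite ?eqxx //; lra.
- have hP := tight00_of_vsig00 h00; move: cov h00; rewrite /tight00 /vsig in hP * => /eqP e.
  by have := v00_le i; rewrite le_eqVlt => /predU1P[-> | lt]; rewrite ?eqxx //; lra.
Qed.

Lemma vsig_notboth1_lt (j : 'I_n) :
  ~~ (vsig j true false && vsig j true true) -> p + q < gamma j + gamma m.
Proof.
move=> nb; have cov := vsig_cover1 j.
case: (boolP (vsig j true false)) => h10 in nb cov *.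
- have hQ := tight11_of_vsig11 nb; move: h10 nb; rewrite /tight11 /vsig in hQ * => /eqP e.
  by have := v11_le j; rewrite le_eqVlt => /predU1P[-> | lt]; rewrite ?eqxx //; lra.
- have hQ := tight11_of_vsig10 h10; move: cov h10; rewrite /tight11 /vsig in hQ * => /eqP e.
  by have := v10_le j; rewrite le_eqVlt => /predU1P[-> | lt]; rewrite ?eqxx //; lra.
Qed.

Lemma vsig_xor0 (i : 'I_n) :
  ~~ (vsig i false false && vsig i false true) -> vsig i false false != vsig i false true.
Proof. by move: (vsig_cover0 i); case: (vsig i false false); case: (vsig i false true). Qed.

Lemma vsig_xor1 (j : 'I_n) :
  ~~ (vsig j true false && vsig j true true) -> vsig j true false != vsig j true true.
Proof. by move: (vsig_cover1 j); case: (vsig j true false); case: (vsig j true true). Qed.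

Lemma vsig_inS1 (t : 'I_n) : (t < m)%N -> p + q = gamma 0%N + gamma t -> inS1 vsig t.
Proof.
move=> tm e; split; [by [] | split; [|split; [|split]]].
- move=> i hi; case: (boolP (vsig i false false && vsig i false true)) => [/andP // | nb].
  by have := vsig_notboth0_lt nb; have := gamma_le gamma_incr hi (ltn_ord i); lra.
- move=> i hi; apply: vsig_xor0; apply/negP => /vsig_both0_le.
  by have := gamma_lt gamma_incr hi (ltn_ord t); lra.
- move=> j; apply: vsig_xor1; apply/negP => /vsig_both1_le.
  by have := gamma_lt gamma_incr tm (ltnSn m); have := gamma0_le gamma_incr j; lra.
- have [_ e1] := tight10_max hY; have [_ e2] := tight01_max hX.
  by exists j1, j0; rewrite /vsig e1 e2 !eqxx.
Qed.

Lemma vsig_inS2 : p + q = gamma 0%N + gamma m -> inS2 vsig.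
Proof.
move=> e; split; [|split; [|split]].
- move=> i hi; case: (boolP (vsig i false false && vsig i false true)) => [/andP // | nb].
  by have := vsig_notboth0_lt nb; rewrite hi /=; lra.
- move=> j hj; case: (boolP (vsig j true false && vsig j true true)) => [/andP // | nb].
  by have := vsig_notboth1_lt nb; rewrite hj /=; lra.
- move=> i hi; apply: vsig_xor0; apply/negP => /vsig_both0_le.
  by have := gamma_lt gamma_incr hi (ltnSn m); lra.
- move=> j hj; apply: vsig_xor1; apply/negP => /vsig_both1_le.
  by have := gamma_lt gamma_incr hj (ltn_ord j); lra.
Qed.

Lemma vsig_inS3 (t : 'I_n) : (0 < t)%N -> p + q = gamma t + gamma m -> inS3 vsig t.
Proof.
move=> t0 e; split; [by [] | split; [by rewrite -ltnS | split; [|split; [|split]]]].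
- move=> j hj; case: (boolP (vsig j true false && vsig j true true)) => [/andP // | nb].
  by have := vsig_notboth1_lt nb; have := gamma_le gamma_incr hj (ltn_ord t); lra.
- move=> j hj; apply: vsig_xor1; apply/negP => /vsig_both1_le.
  by have := gamma_lt gamma_incr hj (ltn_ord j); lra.
- move=> i; apply: vsig_xor0; apply/negP => /vsig_both0_le.
  by have := gamma_lt gamma_incr t0 (ltn_ord t); have := gamma_le_last gamma_incr i; lra.
- have [e1 _] := tight10_max hY; have [e2 _] := tight01_max hX.
  by exists i0, i1; rewrite /vsig e1 e2 !eqxx.
Qed.

Lemma vsig_level :
  [\/ exists2 t : 'I_n, (t < m)%N & p + q = gamma 0%N + gamma t,
      p + q = gamma 0%N + gamma m |
      exists2 t : 'I_n, (0 < t)%N & p + q = gamma t + gamma m].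
Proof.
case: vsig_hub => [[i [/eqP h00 /eqP h01 hP]] | [j [/eqP h10 /eqP h11 hQ]]].
- have e : p + q = gamma 0%N + gamma i by move: hP; rewrite /tight00; lra.
  case: (ltnP i m) => im; first by apply: Or31; exists i.
  by apply: Or32; have -> : m = i by have := ltn_ord i; lia.
- have e : p + q = gamma j + gamma m by move: hQ; rewrite /tight11; lra.
  case: (posnP j) => j0'; last by apply: Or33; exists j.
  by apply: Or32; rewrite e j0'.
Qed.

Lemma Mequiv_inV : exists w, inV gamma w /\ Mequiv v w.
Proof.
exists (uvec gamma (- (p + q)) vsig); split; last exact: Mequiv_uvec_vsig.
exists vsig; case: vsig_level => [[t tm e] | e | [t t0 e]].
- by left; exists t; split; [exact: vsig_inS1 | congr uvec; lra].
- by right; left; split; [exact: vsig_inS2 | congr uvec; lra].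
- by right; right; exists t; split; [exact: vsig_inS3 | congr uvec; lra].
Qed.

End Signature.
End SignatureOfVertex.

Lemma vertex_Mequiv_inV (R : realFieldType) m (gamma : nat -> R) (v : vec R m.+1) :
  (forall i j : nat, (i < j < m.+1)%N -> gamma i < gamma j) ->
  is_vertex gamma v -> exists w, inV gamma w /\ Mequiv v w.
Proof.
move=> gamma_incr /vertexP[Hv Hc].
have [i0 [j0 hX]] := exists_tight01 gamma_incr Hv Hc.
have [i1 [j1 hY]] := exists_tight10 gamma_incr Hv Hc.
exact: Mequiv_inV hX hY.
Qed.

Theorem theorem1 (R : realFieldType) (n : nat) (gamma : nat -> R) :
  (0 < n)%N ->
  (forall i j : nat, (i < j < n)%N -> gamma i < gamma j) ->
  (forall v : vec R n, inV gamma v -> is_vertex gamma v) /\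
  (forall v1 v2 : vec R n, inV gamma v1 -> inV gamma v2 -> v1 <> v2 ->
     ~ Mequiv v1 v2) /\
  (forall v : vec R n, is_vertex gamma v ->
     exists w : vec R n, inV gamma w /\ Mequiv v w).
Proof.
case: n => [// | m] _ gamma_incr; split; [|split].
- by move=> v /(inV_signature gamma_incr)[alpha [B [-> sB]]]; apply: uvec_vertex.
- move=> v1 v2 /(inV_signature gamma_incr)[a1 [B1 [-> s1]]]
    /(inV_signature gamma_incr)[a2 [B2 [-> s2]]] ne E.
  exact/ne/(uvec_Mequiv_eq s1 s2 E).
- by move=> v; apply: vertex_Mequiv_inV.
Qed.
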